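(* Let $\sigma^2>0$, let $\phi^m:\mathbb{R}^d\to\mathbb{R}^m$ and $\phi^r:\mathbb{R}^d\to\mathbb{R}^r$ be feature maps, let $\mathbf{x}_1,\ldots,\mathbf{x}_N\in\mathbb{R}^d$ be training points with $N\ge r$ such that $\Phi^{r\top}_{\mathbf{x}}\Phi^r_{\mathbf{x}}$ is invertible, and let $\mathbf{x}'_1,\ldots,\mathbf{x}'_{N'}\in\mathbb{R}^d$ be test points. Here $\Phi^r_{\mathbf{u}}$ (resp. $\Phi^m_{\mathbf{u}}$) denotes the matrix whose $i$-th row is $\phi^r(\mathbf{u}_i)^\top$ (resp. $\phi^m(\mathbf{u}_i)^\top$). Let $A:=\Phi^{m\top}_{\mathbf{x}}\Phi^r_{\mathbf{x}}(\Phi^{r\top}_{\mathbf{x}}\Phi^r_{\mathbf{x}})^{-1}\in\mathbb{R}^{m\times r}$ (the minimizer of $\sum_{i=1}^N\|\phi^m(\mathbf{x}_i)-A\phi^r(\mathbf{x}_i)\|_2^2$), let $B:=\begin{pmatrix}A\\ I_r\end{pmatrix}\in\mathbb{R}^{(m+r)\times r}$ and $\phi^B(x):=B\phi^r(x)$. Define $k^B_{\mathbf{u},\mathbf{v}}:=\Phi^r_{\mathbf{u}}B^\top B\Phi^{r\top}_{\mathbf{v}}$, $k^r_{\mathbf{u},\mathbf{v}}:=\Phi^r_{\mathbf{u}}\Phi^{r\top}_{\mathbf{v}}$, and $$S^B_{\mathbf{x}',\mathbf{x}'}:=k^B_{\mathbf{x}',\mathbf{x}'}-k^B_{\mathbf{x}',\mathbf{x}}(k^B_{\mathbf{x},\mathbf{x}}+\sigma^2I_N)^{-1}k^B_{\mathbf{x},\mathbf{x}'},\qquad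 S^{\mathrm{BLL}}_{\mathbf{x}',\mathbf{x}'}:=k^r_{\mathbf{x}',\mathbf{x}'}-k^r_{\mathbf{x}',\mathbf{x}}(k^r_{\mathbf{x},\mathbf{x}}+\sigma^2I_N)^{-1}k^r_{\mathbf{x},\mathbf{x}'}.$$ Then $S^B_{\mathbf{x}',\mathbf{x}'}\succeq S^{\mathrm{BLL}}_{\mathbf{x}',\mathbf{x}'}$ in the Loewner (positive semidefinite) order. The same holds when $\phi^B$ is replaced by the equivalent features $\phi^L(x):=L^\top\phi^r(x)$, where $LL^\top=B^\top B$ is the Cholesky decomposition.
   Context: In the motivating application, $\phi^r$ are the last-layer (Bayesian last layer) features of a trained network and $\phi^m$ are the gradients of the network output with respect to all non-last-layer parameters; $S^{\mathrm{BLL}}$ is the predictive covariance of a standard Bayesian last layer and $S^B$ that of the approximate NTK features. *)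

From HB Require Import structures.
From mathcomp Require Import all_boot all_order all_algebra.
Set Implicit Arguments. Unset Strict Implicit. Unset Printing Implicit Defensive.
Import Order.TTheory GRing.Theory Num.Theory.
Local Open Scope ring_scope.

(* Feature maps are represented in row form: phi x = phi(x)^T : 'rV_k. *)

Definition featmx (R : pzRingType) (d k n : nat)
  (phi : 'rV[R]_d -> 'rV[R]_k) (u : 'I_n -> 'rV[R]_d) : 'M[R]_(n, k) :=
  \matrix_(i < n) phi (u i).

Definition lsqA (R : fieldType) (d m r N : nat)
  (phim : 'rV[R]_d -> 'rV[R]_m) (phir : 'rV[R]_d -> 'rV[R]_r)
  (x : 'I_N -> 'rV[R]_d) : 'M[R]_(m, r) :=
  (featmx phim x)^T *m featmx phir x *m invmx ((featmx phir x)^T *m featmx phir x).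

Definition Bmx (R : fieldType) (d m r N : nat)
  (phim : 'rV[R]_d -> 'rV[R]_m) (phir : 'rV[R]_d -> 'rV[R]_r)
  (x : 'I_N -> 'rV[R]_d) : 'M[R]_(m + r, r) :=
  col_mx (lsqA phim phir x) 1%:M.

(* Linear transform of features: psi(x) := M phi(x), in row form phi(x)^T M^T. *)
Definition lin_feat (R : pzRingType) (d r p : nat) (M : 'M[R]_(p, r))
  (phi : 'rV[R]_d -> 'rV[R]_r) : 'rV[R]_d -> 'rV[R]_p :=
  fun z => phi z *m M^T.

Definition kmx (R : pzRingType) (d k n n' : nat) (phi : 'rV[R]_d -> 'rV[R]_k)
  (u : 'I_n -> 'rV[R]_d) (v : 'I_n' -> 'rV[R]_d) : 'M[R]_(n, n') :=
  featmx phi u *m (featmx phi v)^T.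

Definition postcov (R : fieldType) (d k N N' : nat) (phi : 'rV[R]_d -> 'rV[R]_k)
  (sigma2 : R) (x : 'I_N -> 'rV[R]_d) (x' : 'I_N' -> 'rV[R]_d) : 'M[R]_N' :=
  kmx phi x' x' - kmx phi x' x *m invmx (kmx phi x x + sigma2%:M) *m kmx phi x x'.

Definition psdmx (R : numDomainType) (n : nat) (M : 'M[R]_n) : Prop :=
  forall v : 'cV[R]_n, 0 <= (v^T *m M *m v) 0 0.

Definition loewner_ge (R : numDomainType) (n : nat) (S T : 'M[R]_n) : Prop :=
  psdmx (S - T).

Definition is_cholesky (R : numDomainType) (n : nat) (L M : 'M[R]_n) : Prop :=
  [/\ forall i j : 'I_n, (i < j)%N -> L i j = 0,
      forall i : 'I_n, 0 < L i i
    & L *m L^T = M].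

From HB Require Import structures.
From mathcomp Require Import all_boot all_order all_algebra.
From mathcomp Require Import ring.
Import Order.TTheory GRing.Theory Num.Theory.
Set Implicit Arguments. Unset Strict Implicit. Unset Printing Implicit Defensive.
Local Open Scope ring_scope.

(* Both covariances are posteriors of Bayesian linear regression on the same
   features phi^r, with weight prior covariance G = B^T B for phi^B (also for
   phi^L, as L L^T = B^T B) and G = I for the Bayesian last layer:
     S_G = Phi' G Phi'^T - Phi' G Phi^T (Phi G Phi^T + sigma^2 I)^-1 Phi G Phi'^T.
   Completing the square shows that v^T S_G v is the minimum over w of the
   ridge objective (a - Phi^T w)^T G (a - Phi^T w) + sigma^2 w^T w with
   a = Phi'^T v, which is monotone in G.  Since B^T B = A^T A + I >= I, the
   comparison follows. *)

Ltac mx11_ring := apply/matrixP => i j; rewrite !ord1 !mxE; ring.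

Section QuadraticForms.
Variable R : realDomainType.

Lemma mulmx_tr_self_ge0 n (u : 'cV[R]_n) : 0 <= (u^T *m u) 0 0.
Proof. by rewrite mxE; apply: sumr_ge0 => i _; rewrite mxE -expr2 sqr_ge0. Qed.

Lemma mulmx_tr_self_eq0 n (u : 'cV[R]_n) : (u^T *m u) 0 0 = 0 -> u = 0.
Proof.
rewrite mxE => /psumr_eq0P u0; apply/matrixP => i j; rewrite ord1 mxE.
have sq_ge0 k : true -> 0 <= u^T 0 k * u k 0 by rewrite mxE -expr2 sqr_ge0.
have /eqP := u0 sq_ge0 i isT.
by rewrite mxE mulf_eq0 orbb => /eqP.
Qed.

Lemma qform_scalar_mx n (s : R) (v : 'cV[R]_n) :
  v^T *m s%:M *m v = s *: (v^T *m v).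
Proof. by rewrite mul_mx_scalar scalemxAl. Qed.

Lemma psdmxD n (A B : 'M[R]_n) : psdmx A -> psdmx B -> psdmx (A + B).
Proof. by move=> A0 B0 v; rewrite mulmxDr mulmxDl mxE addr_ge0. Qed.

Lemma psdmx_scalar n (s : R) : 0 <= s -> psdmx (s%:M : 'M_n).
Proof. by move=> s0 v; rewrite qform_scalar_mx mxE mulr_ge0 ?mulmx_tr_self_ge0. Qed.

Lemma psdmx_mulmx_tr p n (A : 'M[R]_(p, n)) : psdmx (A^T *m A).
Proof. by move=> v; rewrite mulmxA -trmx_mul -mulmxA mulmx_tr_self_ge0. Qed.

Lemma psdmx_conj n p (A : 'M[R]_(n, p)) (G : 'M[R]_p) :
  psdmx G -> psdmx (A *m G *m A^T).
Proof. by move=> G0 v; have := G0 (A^T *m v); rewrite trmx_mul trmxK !mulmxA. Qed.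

End QuadraticForms.

Lemma psdmx_add_scalar_unitmx (R : realFieldType) n (M : 'M[R]_n) (s : R) :
  psdmx M -> 0 < s -> M + s%:M \in unitmx.
Proof.
move=> M0 s0; rewrite unitmxE unitfE; apply/negP => /det0P [v v0 vM].
have : ((v^T)^T *m (M + s%:M) *m v^T) 0 0 = 0 by rewrite trmxK vM mul0mx mxE.
rewrite mulmxDr mulmxDl qform_scalar_mx mxE [X in _ + X]mxE => /eqP.
rewrite paddr_eq0 ?(M0 v^T) ?mulr_ge0 ?mulmx_tr_self_ge0 ?(ltW s0) //.
rewrite mulf_eq0 (gt_eqF s0) /=.
by case/andP => _ /eqP/mulmx_tr_self_eq0/eqP; rewrite trmx_eq0 (negPf v0).
Qed.

Lemma complete_square (R : comUnitRingType) n (K : 'M[R]_n) (c w : 'cV[R]_n) :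
  K^T = K -> K \in unitmx ->
  w^T *m K *m w - w^T *m c - c^T *m w =
  (w - invmx K *m c)^T *m K *m (w - invmx K *m c) - c^T *m invmx K *m c.
Proof.
move=> Ksym Kunit; set u := invmx K *m c.
have Ku : K *m u = c by rewrite mulmxA mulmxV ?mul1mx.
have uK : u^T *m K = c^T by rewrite -Ksym -trmx_mul Ku.
rewrite !mulmxBr [(w - u)^T]linearB /= !mulmxBl -[w^T *m K *m u]mulmxA Ku uK.
rewrite -[c^T *m invmx K *m c]mulmxA -/u.
by rewrite opprD opprK !addrA addrK addrAC.
Qed.

Section RidgeRegression.
Variables (R : realFieldType) (N r : nat) (Phi : 'M[R]_(N, r)) (s : R).

Definition kreg (G : 'M[R]_r) : 'M[R]_N := Phi *m G *m Phi^T + s%:M.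

Definition postvar (G : 'M[R]_r) (a : 'cV[R]_r) : 'M[R]_1 :=
  a^T *m G *m a - a^T *m G *m Phi^T *m invmx (kreg G) *m Phi *m G *m a.

Definition ridge_obj (G : 'M[R]_r) (a : 'cV[R]_r) (w : 'cV[R]_N) : 'M[R]_1 :=
  (a - Phi^T *m w)^T *m G *m (a - Phi^T *m w) + s *: (w^T *m w).

Lemma ridge_objE G a w : G^T = G -> kreg G \in unitmx ->
  let w0 := invmx (kreg G) *m (Phi *m G *m a) in
  ridge_obj G a w = postvar G a + (w - w0)^T *m kreg G *m (w - w0).
Proof.
move=> Gsym Kunit w0; set c := Phi *m G *m a.
have Ksym : (kreg G)^T = kreg G.
  by rewrite /kreg linearD /= tr_scalar_mx !trmx_mul trmxK Gsym mulmxA.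
have cT : c^T = a^T *m G *m Phi^T by rewrite !trmx_mul Gsym mulmxA.
have expand : ridge_obj G a w =
    a^T *m G *m a + (w^T *m kreg G *m w - w^T *m c - c^T *m w).
  rewrite /ridge_obj /kreg [(a - _)^T]linearB /= trmx_mul trmxK.
  rewrite !mulmxBr !mulmxBl mulmxDr mulmxDl qform_scalar_mx cT /c !mulmxA.
  by mx11_ring.
rewrite expand complete_square // /postvar cT /c -/w0 !mulmxA.
by mx11_ring.
Qed.

Lemma ridge_obj_mono (H G : 'M[R]_r) a w :
  psdmx (G - H) -> ridge_obj H a w 0 0 <= ridge_obj G a w 0 0.
Proof.
move=> GH; pose v := a - Phi^T *m w.
have diff : ridge_obj G a w - ridge_obj H a w = v^T *m (G - H) *m v.
  by rewrite /ridge_obj -/v (mulmxBr v^T) (mulmxBl _ _ v); mx11_ring.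
by have := GH v; rewrite -diff -!trace_mx11 raddfB subr_ge0.
Qed.

Hypothesis s_gt0 : 0 < s.

Lemma kreg_psd (G : 'M[R]_r) : psdmx G -> psdmx (kreg G).
Proof. by move=> G0; apply: psdmxD; [apply: psdmx_conj | apply/psdmx_scalar/ltW]. Qed.

Lemma kreg_unit (G : 'M[R]_r) : psdmx G -> kreg G \in unitmx.
Proof. by move=> G0; apply: psdmx_add_scalar_unitmx => //; apply: psdmx_conj. Qed.

Lemma postvar_le_ridge_obj (G : 'M[R]_r) a w : G^T = G -> psdmx G ->
  postvar G a 0 0 <= ridge_obj G a w 0 0.
Proof.
move=> Gsym G0; rewrite ridge_objE ?kreg_unit // -[leRHS]trace_mx11 raddfD /=.
by rewrite !trace_mx11 lerDl kreg_psd.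
Qed.

Lemma ridge_obj_minimizer (G : 'M[R]_r) a : G^T = G -> psdmx G ->
  ridge_obj G a (invmx (kreg G) *m (Phi *m G *m a)) = postvar G a.
Proof.
by move=> Gsym G0; rewrite ridge_objE ?kreg_unit // subrr trmx0 !mul0mx addr0.
Qed.

Lemma postvar_mono (H G : 'M[R]_r) a : H^T = H -> G^T = G ->
  psdmx H -> psdmx (G - H) -> postvar H a 0 0 <= postvar G a 0 0.
Proof.
move=> Hsym Gsym H0 GH; have G0 : psdmx G by rewrite -(subrK H G); apply: psdmxD.
rewrite -(ridge_obj_minimizer a Gsym G0).
exact: le_trans (postvar_le_ridge_obj _ _ Hsym H0) (ridge_obj_mono _ _ GH).
Qed.

End RidgeRegression.

Section PredictiveCovariance.
Variables (R : realFieldType) (N N' r : nat).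
Variables (Phi : 'M[R]_(N, r)) (Phi' : 'M[R]_(N', r)) (s : R).

Definition wpostcov (G : 'M[R]_r) : 'M[R]_N' :=
  Phi' *m G *m Phi'^T -
  Phi' *m G *m Phi^T *m invmx (kreg Phi s G) *m Phi *m G *m Phi'^T.

Lemma wpostcov_qform G v : v^T *m wpostcov G *m v = postvar Phi s G (Phi'^T *m v).
Proof. by rewrite /wpostcov /postvar mulmxBr mulmxBl trmx_mul trmxK !mulmxA. Qed.

Lemma wpostcov_mono (H G : 'M[R]_r) : 0 < s -> H^T = H -> G^T = G ->
  psdmx H -> psdmx (G - H) -> loewner_ge (wpostcov G) (wpostcov H).
Proof.
move=> s_gt0 Hsym Gsym H0 GH v; rewrite mulmxBr mulmxBl !wpostcov_qform.
rewrite -trace_mx11 raddfB /= !trace_mx11 subr_ge0.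
exact: postvar_mono.
Qed.

End PredictiveCovariance.

Section FeatureMaps.
Variables (R : realFieldType) (d r N N' : nat) (phi : 'rV[R]_d -> 'rV[R]_r).
Variables (s : R) (x : 'I_N -> 'rV[R]_d) (x' : 'I_N' -> 'rV[R]_d).

Lemma featmx_lin_feat p (M : 'M[R]_(p, r)) n (u : 'I_n -> 'rV[R]_d) :
  featmx (lin_feat M phi) u = featmx phi u *m M^T.
Proof. by apply/row_matrixP => i; rewrite row_mul /featmx !rowK. Qed.

Lemma postcov_lin_feat p (M : 'M[R]_(p, r)) :
  postcov (lin_feat M phi) s x x' =
  wpostcov (featmx phi x) (featmx phi x') s (M^T *m M).
Proof.
by rewrite /postcov /kmx !featmx_lin_feat /wpostcov /kreg !trmx_mul trmxK !mulmxA.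
Qed.

Lemma postcov_wpostcov1 :
  postcov phi s x x' = wpostcov (featmx phi x) (featmx phi x') s 1%:M.
Proof. by rewrite /postcov /kmx /wpostcov /kreg !mulmx1 !mulmxA. Qed.

Lemma postcov_lin_feat_ge p (M : 'M[R]_(p, r)) :
  0 < s -> psdmx (M^T *m M - 1%:M) ->
  loewner_ge (postcov (lin_feat M phi) s x x') (postcov phi s x x').
Proof.
move=> s_gt0 M1; rewrite postcov_lin_feat postcov_wpostcov1.
apply: wpostcov_mono => //; first by rewrite trmx1.
- by rewrite trmx_mul trmxK.
- by move=> v; rewrite mulmx1 mulmx_tr_self_ge0.
Qed.

End FeatureMaps.

Theorem theorem3p3 (R : realFieldType) (d m r N N' : nat) (sigma2 : R)
  (phim : 'rV[R]_d -> 'rV[R]_m) (phir : 'rV[R]_d -> 'rV[R]_r)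
  (x : 'I_N -> 'rV[R]_d) (x' : 'I_N' -> 'rV[R]_d) :
  0 < sigma2 ->
  (r <= N)%N ->
  (featmx phir x)^T *m featmx phir x \in unitmx ->
  loewner_ge (postcov (lin_feat (Bmx phim phir x) phir) sigma2 x x')
             (postcov phir sigma2 x x')
  /\ (forall L : 'M[R]_r,
        is_cholesky L ((Bmx phim phir x)^T *m Bmx phim phir x) ->
        loewner_ge (postcov (lin_feat L^T phir) sigma2 x x')
                   (postcov phir sigma2 x x')).
Proof.
(* The hypotheses on Phi^T Phi only make A the least-squares fit; any A works. *)
move=> s_gt0 _ _; set B := Bmx phim phir x.
have BtB1 : psdmx (B^T *m B - 1%:M).
  rewrite /B /Bmx tr_col_mx mul_row_col trmx1 mulmx1 addrK.
  exact: psdmx_mulmx_tr.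
split; first exact: postcov_lin_feat_ge.
by move=> L [_ _ LLt]; apply: postcov_lin_feat_ge; rewrite // trmxK LLt.
Qed.
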